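(* In the $q$-boson algebra $\mathcal H_n$ with $z=1$ (site indices read modulo $n$, so $\beta_0=\beta_n$, $\beta^*_{n+1}=\beta^*_1$), for every $j=1,\dots,n$ one has the identities of formal power series in $v$ $$Q^-(v)\beta_j-\beta_jQ^-(v)=-v\,\beta_{j-1}\big[Q^-(v)-\beta_jQ^-(v)\beta_j^*\big],$$ $$Q^-(v)\beta_j^*-\beta_j^*Q^-(v)=v\big[Q^-(v)-\beta_jQ^-(v)\beta_j^*\big]\beta^*_{j+1}.$$
   Context: $q$ is an indeterminate, $n\ge1$. $\mathcal H_n$ is the $\mathbb C(q)$-algebra generated by $\beta_i,\beta_i^*,q^{\pm N_i}$ ($i=1,\dots,n$) with relations: $q^{\pm N_i}$ mutually inverse and commuting, $q^{N_i}\beta_j=q^{-\delta_{ij}}\beta_jq^{N_i}$, $q^{N_i}\beta_j^*=q^{\delta_{ij}}\beta^*_jq^{N_i}$, $\beta_i\beta_j^*-\beta_j^*\beta_i=\delta_{ij}(1-q^2)q^{2N_i}$, $\beta_i\beta_i^*-q^2\beta_i^*\beta_i=1-q^2$, generators at different sites commute. $(q^2)_m=\prod_{j=1}^m(1-q^{2j})$. $Q^-(v)=\sum_{r\ge0}Q^-_rv^r$ with $$Q^-_r=\sum_{\alpha}z^{\alpha_n}\frac{\beta_n^{\alpha_n}(\beta_{n-1}\beta_n^* )^{\alpha_{n-1}}\cdots(\beta_1\beta_2^* )^{\alpha_1}(\beta_1^* )^{\alpha_n}}{(q^2)_{\alpha_1}\cdots(q^2)_{\alpha_n}}\prod_{i=1}^nq^{\alpha_i(\alpha_i+1)},$$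 summed over compositions $\alpha\in\mathbb Z^n_{\ge0}$ of $r$ (here $z=1$). *)

From mathcomp Require Import all_boot all_order all_algebra all_field.
From mathcomp Require Import complex.
From mathcomp Require Import Rstruct.
Set Implicit Arguments. Unset Strict Implicit. Unset Printing Implicit Defensive.
Import GRing.Theory.
Local Open Scope ring_scope.

Definition CC : fieldType := (Rdefinitions.R)[i].
Definition Kq : fieldType := {fraction {poly CC}}.
Definition qq : Kq := @FracField.tofrac _ 'X.

Definition qpoch (m : nat) : Kq := \prod_(1 <= j < m.+1) (1 - qq ^+ (2 * j)).

Fixpoint comps (n r : nat) : seq (seq nat) :=
  match n with
  | 0 => if r == 0%N then [:: [::]] else [::]
  | n'.+1 => flatten [seq [seq k :: s | s <- comps n' (r - k)] | k <- iota 0 r.+1]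
  end.

Section Qminus.
Variable A : algType Kq.
Variable n : nat.
(* generators beta_i, beta*_i, indexed by sites i = 1..n *)
Variables b bs : nat -> A.

(* term of Q^-_r indexed by the composition alpha = s (alpha_i = nth 0 s (i-1)), z = 1 *)
Definition Qterm (s : seq nat) : A :=
  let a i := nth 0%N s i.-1 in
  (\prod_(k <- s) (qq ^+ (k * k.+1) / qpoch k)) *:
  (b n ^+ a n
   * (\prod_(i <- rev (iota 1 n.-1)) (b i * bs i.+1) ^+ a i)
   * bs 1 ^+ a n).

(* coefficient Q^-_r of v^r in Q^-(v) *)
Definition Qm (r : nat) : A := \sum_(s <- comps n r) Qterm s.

(* coefficient of v^r in a series whose coefficients are given by f, shifted by one
   (i.e. v * F(v)); coefficient 0 of v F(v) is 0 *)
Definition shift1 (f : nat -> A) (r : nat) : A := if r is r'.+1 then f r' else 0.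
End Qminus.

(* The defining relations of the q-boson algebra H_n, for generators
   b i = beta_i, bs i = beta*_i, qN i = q^{N_i}, qNi i = q^{-N_i}, sites i = 1..n. *)
Definition qboson_rel (A : algType Kq) (n : nat) (b bs qN qNi : nat -> A) : Prop :=
  (forall i, (1 <= i <= n)%N -> qN i * qNi i = 1 /\ qNi i * qN i = 1) /\
  [/\
      (forall i j, (1 <= i <= n)%N -> (1 <= j <= n)%N ->
         [/\ qN i * qN j = qN j * qN i, qN i * qNi j = qNi j * qN i
           & qNi i * qNi j = qNi j * qNi i]),
      (forall i j, (1 <= i <= n)%N -> (1 <= j <= n)%N ->
         qN i * b j = (if i == j then qq^-1 else 1) *: (b j * qN i)
         /\ qN i * bs j = (if i == j then qq else 1) *: (bs j * qN i)),
      (forall i j, (1 <= i <= n)%N -> (1 <= j <= n)%N ->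
         b i * bs j - bs j * b i = (if i == j then (1 - qq ^+ 2) *: (qN i ^+ 2) else 0)),
      (forall i, (1 <= i <= n)%N -> b i * bs i - qq ^+ 2 *: (bs i * b i) = (1 - qq ^+ 2)%:A)
    & (forall i j, (1 <= i <= n)%N -> (1 <= j <= n)%N -> i != j ->
         forall x y, x \in [:: b i; bs i; qN i; qNi i] -> y \in [:: b j; bs j; qN j; qNi j] ->
         x * y = y * x)].

From mathcomp Require Import all_boot all_order all_algebra all_field.
From mathcomp Require Import zify.
Import GRing.Theory.
Local Open Scope ring_scope.

(* Write [Q^-_r] as a sum over compositions [alpha] of [c(alpha) M(alpha)] where, regrouped
   by sites, [M(alpha) = prod_i beta_i^(alpha_i) beta*_i^(alpha_(i-1))].  Only the factor at
   site [j] fails to commute with [beta_j], and the one-site relations give, with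
   [t = q^(2N_j)],
     [beta^a beta*^(x+1) beta - beta beta^a beta*^(x+1) = -(1 - q^(2x+2)) beta^a beta*^x t],
     [beta^a beta*^x - beta (beta^a beta*^x) beta* = q^(2x+2) beta^a beta*^x t],
   while [c(alpha + e_(j-1)) (1 - q^(2x+2)) = c(alpha) q^(2x+2)] for [x = alpha_(j-1)].
   So the term of [alpha + e_(j-1)] in [[Q^-, beta_j]] is [-beta_(j-1)] times the term of
   [alpha] in [Q^- - beta_j Q^- beta*_j], and the terms with [alpha_(j-1) = 0] vanish.
   The same argument with [alpha + e_j] handles [beta*_j]. *)

Lemma qqX_neq1 k : (0 < k)%N -> qq ^+ k != 1.
Proof.
move=> k0; rewrite /qq -tofracXn -(tofrac1 _) tofrac_eq.
apply/eqP => XkE; have := congr1 (fun p : {poly CC} => size p) XkE.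
by rewrite size_polyXn size_poly1 => -[k_eq0]; rewrite k_eq0 in k0.
Qed.

Lemma qpochS m : qpoch m.+1 = qpoch m * (1 - qq ^+ (2 * m.+1)).
Proof. by rewrite /qpoch big_nat_recr. Qed.

Lemma qpoch_neq0 m : qpoch m != 0.
Proof.
rewrite /qpoch big_nat_cond prodf_seq_neq0; apply/allP => i _; apply/implyP.
by move=> /andP [/andP [i1 _] _]; rewrite subr_eq0 eq_sym qqX_neq1 // muln_gt0.
Qed.

Definition qcoef (k : nat) : Kq := qq ^+ (k * k.+1) / qpoch k.

Lemma qcoefS k : qcoef k.+1 * (1 - qq ^+ (2 * k.+1)) = qcoef k * qq ^+ (2 * k.+1).
Proof.
have u0 : 1 - qq ^+ (2 * k.+1) != 0 by rewrite subr_eq0 eq_sym qqX_neq1.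
rewrite /qcoef qpochS (_ : k.+1 * k.+2 = k * k.+1 + 2 * k.+1)%N; last by lia.
by rewrite exprD invfM -!mulrA mulVf // mulr1 [qq ^+ (2 * _) * _]mulrC.
Qed.

Definition comp_coef (s : seq nat) : Kq := \prod_(k <- s) qcoef k.

Lemma comp_coef_incr_nth s p : (p < size s)%N ->
  comp_coef (incr_nth s p) * (1 - qq ^+ (2 * (nth 0%N s p).+1))
  = comp_coef s * qq ^+ (2 * (nth 0%N s p).+1).
Proof.
rewrite /comp_coef; elim: s p => [|x s IHs] [|p] //= p_lt; rewrite !big_cons -!mulrA.
  by rewrite [_ * (1 - _)]mulrC [_ * qq ^+ _]mulrC !mulrA qcoefS.
by rewrite IHs.
Qed.

Lemma mem_comps n r s : (s \in comps n r) = (size s == n) && (sumn s == r).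
Proof.
elim: n r s => [|n IHn] r s.
  by case: r => [|r]; case: s => [|x s] //=; rewrite ?inE.
apply/(allpairsPdep (f := fun k (t : seq nat) => k :: t) (t := fun k => comps n (r - k)))/idP.
  move=> [k [t [k_in t_in ->]]]; rewrite mem_iota in k_in; rewrite IHn in t_in.
  case/andP: t_in => /eqP size_t /eqP sum_t; rewrite /= size_t sum_t eqxx /=.
  by apply/eqP; rewrite subnKC //; case/andP: k_in.
case: s => [|x s] //= /andP [/eqP [size_s] /eqP sum_s].
exists x, s; split => //.
  by rewrite (mem_iota 0 r.+1) /= add0n ltnS -sum_s leq_addr.
by rewrite IHn size_s -sum_s addKn !eqxx.
Qed.

Lemma uniq_comps n r : uniq (comps n r).
Proof.
elim: n r => [|n IHn] r; first by case: r.
apply: (allpairs_uniq_dep (f := fun k (t : seq nat) => k :: t)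
          (t := fun k => comps n (r - k))); first exact: iota_uniq.
  by move=> x _; exact: IHn.
by move=> [x1 y1] [x2 y2] _ _ /= [-> ->].
Qed.

Lemma sumn_incr_nth s p : sumn (incr_nth s p) = (sumn s).+1.
Proof.
elim: s p => [|x s IHs] [|p] //=; first by elim: p => //= p ->.
by rewrite IHs addnS.
Qed.

Lemma nth_leq_sumn s p : (nth 0%N s p <= sumn s)%N.
Proof.
elim: s p => [|x s IHs] [|p] //=; first exact: leq_addr.
exact: leq_trans (IHs p) (leq_addl _ _).
Qed.

Lemma perm_comps_incr_nth {n} r {p} : (p < n)%N ->
  perm_eq [seq s <- comps n r.+1 | (0 < nth 0%N s p)%N]
          [seq incr_nth s p | s <- comps n r].
Proof.
move=> p_lt; apply: uniq_perm.
- by rewrite filter_uniq // uniq_comps.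
- rewrite map_inj_in_uniq ?uniq_comps // => s1 s2.
  rewrite !mem_comps => /andP [/eqP size1 _] /andP [/eqP size2 _] eq_incr.
  apply: (@eq_from_nth _ 0%N); first by rewrite size1 size2.
  move=> k _; have := congr1 (fun v => nth 0%N v k) eq_incr.
  by rewrite /= !nth_incr_nth => /eqP; rewrite eqn_add2l => /eqP.
move=> t; rewrite mem_filter mem_comps; apply/idP/mapP.
  case/andP => t_p_gt0 /andP [/eqP size_t /eqP sum_t].
  set s := mkseq (fun k => nth 0%N t k - (p == k))%N n.
  have t_incr : t = incr_nth s p.
    apply: (@eq_from_nth _ 0%N); first by rewrite size_incr_nth size_mkseq p_lt size_t.
    move=> k _; rewrite nth_incr_nth; case: (ltnP k n) => k_n.
      rewrite nth_mkseq //; case: eqP => [<-|_] /=; last by rewrite subn0.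
      by rewrite add1n subn1 prednK.
    rewrite !nth_default ?size_mkseq ?size_t //.
    by case: eqP => // k_p; move: p_lt; rewrite k_p ltnNge k_n.
  exists s => //; rewrite mem_comps size_mkseq eqxx /=.
  by move: sum_t; rewrite t_incr sumn_incr_nth => -[->].
case=> s; rewrite mem_comps => /andP [/eqP size_s /eqP sum_s] ->.
by rewrite nth_incr_nth eqxx size_incr_nth size_s p_lt sumn_incr_nth sum_s !eqxx.
Qed.

Lemma big_comps_incr_nth (V : zmodType) (D E : seq nat -> V) n r p : (p < n)%N ->
  (forall s, s \in comps n r -> nth 0%N s p = 0%N -> D s = 0) ->
  (forall s, s \in comps n r.-1 -> D (incr_nth s p) = E s) ->
  \sum_(s <- comps n r) D s = if r is r'.+1 then \sum_(s <- comps n r') E s else 0.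
Proof.
move=> p_lt; case: r => [|r] D0 DE.
  apply: big1_seq => s /andP [_ s_in]; apply: D0 => //.
  have := nth_leq_sumn s p; move: s_in; rewrite mem_comps => /andP [_ /eqP ->].
  by rewrite leqn0 => /eqP.
rewrite (bigID (fun s => (0 < nth 0%N s p)%N)) /= [X in _ + X]big1_seq ?addr0.
  rewrite -big_filter (perm_big _ (perm_comps_incr_nth r p_lt)) big_map.
  exact: eq_big_seq.
by move=> s /andP [p_gt0 s_in]; apply: D0 => //; move: p_gt0; rewrite lt0n negbK => /eqP.
Qed.

Section CommutingProducts.
Context {R : pzRingType}.

Lemma rev_iotaS m : rev (iota 1 m.+1) = m.+1 :: rev (iota 1 m).
Proof. by rewrite -[m.+1]addn1 iotaD rev_cat /= add1n addn1. Qed.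

Lemma prod_rev_iota_shift (x y : nat -> R) m :
  x m.+1 * (\prod_(i <- rev (iota 1 m)) (y i.+1 * x i)) * y 1%N
  = \prod_(i <- rev (iota 1 m.+1)) (x i * y i).
Proof.
elim: m => [|m IHm]; first by rewrite /= big_nil big_seq1 mulr1.
by rewrite rev_iotaS big_cons [in RHS]rev_iotaS big_cons -IHm !mulrA.
Qed.

Lemma perm_big_comm {I : eqType} (F : I -> R) (l1 l2 : seq I) :
  uniq l1 -> perm_eq l1 l2 ->
  {in l1 &, forall i k, i != k -> GRing.comm (F i) (F k)} ->
  \prod_(i <- l1) F i = \prod_(i <- l2) F i.
Proof.
elim: l1 l2 => [|x l1 IHl] l2 uniq_l1 perm_l12 commF.
  by move: perm_l12; rewrite perm_sym => /perm_nilP ->.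
have x_l2 : x \in l2 by rewrite -(perm_mem perm_l12) mem_head.
have uniq_l2 : uniq l2 by rewrite -(perm_uniq perm_l12).
case/splitPr: x_l2 perm_l12 uniq_l2 => p1 p2 perm_l12 uniq_l2.
have perm_l1 : perm_eq l1 (p1 ++ p2).
  by rewrite -(perm_cons x); apply: (perm_trans perm_l12); rewrite -cat1s perm_catCA.
case/andP: uniq_l1 => _ uniq_l1.
have comm_x_p1 : GRing.comm (F x) (\prod_(i <- p1) F i).
  rewrite big_seq; apply: commr_prod => i i_p1; apply: commF.
  - exact: mem_head.
  - by rewrite (perm_mem perm_l12) mem_cat i_p1.
  - apply/eqP => x_i; move: uniq_l2; rewrite cat_uniq => /and3P [_ /hasPn p2_notin _].
    by move: (p2_notin x (mem_head _ _)); rewrite x_i i_p1.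
rewrite big_cons big_cat big_cons /= mulrA -comm_x_p1 -mulrA -big_cat.
rewrite -(IHl _ uniq_l1 perm_l1) // => i k i_l1 k_l1.
by apply: commF; rewrite inE ?i_l1 ?k_l1 orbT.
Qed.
End CommutingProducts.

Section SiteCalculus.
Context {F : fieldType} {R : algType F} {q : F} {b bs t : R}.
Hypotheses (bs_b : bs * b = 1 - t) (b_bs : b * bs = 1 - q ^+ 2 *: t).
Hypotheses (t_bs : t * bs = q ^+ 2 *: (bs * t)) (b_t : b * t = q ^+ 2 *: (t * b)).

Let qX2S m : q ^+ (2 * m.+2) = q ^+ (2 * m.+1) * q ^+ 2.
Proof. by rewrite -exprD mulnS addnC. Qed.

Lemma mul_b_bsX m : b * bs ^+ m.+1 = bs ^+ m * (1 - q ^+ (2 * m.+1) *: t).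
Proof.
elim: m => [|m IHm]; first by rewrite expr1 expr0 mul1r b_bs.
rewrite exprSr mulrA IHm -mulrA mulrBl mul1r -scalerAl t_bs scalerA -qX2S.
by rewrite scalerAr exprSr -mulrA; congr (_ * _); rewrite mulrBr mulr1.
Qed.

Lemma mul_bX_bs a : b ^+ a.+1 * bs = (1 - q ^+ (2 * a.+1) *: t) * b ^+ a.
Proof.
elim: a => [|a IHa]; first by rewrite expr1 expr0 mulr1 b_bs.
rewrite exprS -mulrA IHa mulrA mulrBr mulr1 -scalerAr b_t scalerA -qX2S.
by rewrite scalerAl exprS mulrA; congr (_ * _); rewrite mulrBl mul1r.
Qed.

Lemma commutator_site_b a x :
  b ^+ a * bs ^+ x.+1 * b - b * (b ^+ a * bs ^+ x.+1)
  = - ((1 - q ^+ (2 * x.+1)) *: (b ^+ a * (bs ^+ x * t))).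
Proof.
rewrite mulrA (commrX a (commr_refl b)) -!mulrA -mulrBr.
rewrite [in RHS]scalerAr -[in RHS]mulrN; congr (_ * _).
rewrite mul_b_bsX exprSr -mulrA bs_b -mulrBr [in RHS]scalerAr -[in RHS]mulrN; congr (_ * _).
by rewrite scalerBl scale1r !opprB addrC addrA subrK.
Qed.

Lemma defect_site_b a x :
  b ^+ a * bs ^+ x - b * (b ^+ a * bs ^+ x) * bs
  = q ^+ (2 * x.+1) *: (b ^+ a * (bs ^+ x * t)).
Proof.
rewrite mulrA (commrX a (commr_refl b)) -!mulrA -exprSr -mulrBr scalerAr.
congr (_ * _); by rewrite mul_b_bsX mulrBr mulr1 opprB addrC subrK scalerAr.
Qed.

Lemma commutator_site_bs a y :
  b ^+ a.+1 * bs ^+ y * bs - bs * (b ^+ a.+1 * bs ^+ y)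
  = (1 - q ^+ (2 * a.+1)) *: (t * b ^+ a * bs ^+ y).
Proof.
rewrite -mulrA -(commrX y (commr_refl bs)) !mulrA -mulrBl !scalerAl; congr (_ * _).
rewrite mul_bX_bs exprS mulrA bs_b -mulrBl; congr (_ * _).
by rewrite scalerBl scale1r opprB addrC addrA subrK.
Qed.

Lemma defect_site_bs a y :
  b ^+ a * bs ^+ y - b * (b ^+ a * bs ^+ y) * bs
  = q ^+ (2 * a.+1) *: (t * b ^+ a * bs ^+ y).
Proof.
have -> : b * (b ^+ a * bs ^+ y) * bs = b ^+ a.+1 * bs * bs ^+ y.
  by rewrite -!mulrA (commrX y (commr_refl bs)) !mulrA -exprS.
rewrite -mulrBl !scalerAl; congr (_ * _).
by rewrite mul_bX_bs mulrBl mul1r opprB addrC subrK.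
Qed.
End SiteCalculus.

Section Transfer.
Context {F : fieldType} {R : algType F}.

(* [X * (Y * W)] and [X' * (Y' * W)] stand for the monomials of [alpha + e_m] and [alpha],
   split into the factors at sites [m], [m + 1] and the remaining ones [W]. *)
Lemma commutator_b_transfer {bj bsj bm X X' Y Y' W Z : R} {c c' k : F} :
  GRing.comm bj X -> GRing.comm bj X' -> GRing.comm bj W -> GRing.comm bsj W ->
  bm * X' = X ->
  Y * bj - bj * Y = - ((1 - k) *: Z) -> Y' - bj * Y' * bsj = k *: Z ->
  c * (1 - k) = c' * k ->
  c *: (X * (Y * W) * bj - bj * (X * (Y * W)))
  = - (bm * (c' *: (X' * (Y' * W)) - bj * (c' *: (X' * (Y' * W))) * bsj)).
Proof.
move=> bj_X bj_X' bj_W bsj_W bm_X' Y_bj Y'_defect c_k.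
have -> : X * (Y * W) * bj - bj * (X * (Y * W)) = X * ((Y * bj - bj * Y) * W).
  rewrite [in RHS]mulrBl mulrBr; congr (_ - _); first by rewrite -!mulrA bj_W.
  by rewrite !mulrA bj_X.
have -> : bj * (c' *: (X' * (Y' * W))) * bsj = c' *: (X' * ((bj * Y' * bsj) * W)).
  rewrite -scalerAr -scalerAl; congr (_ *: _).
  by rewrite -!mulrA bsj_W !mulrA bj_X'.
rewrite -scalerBr -mulrBr -mulrBl Y_bj Y'_defect.
rewrite mulNr -!scalerAl mulrN -!scalerAr [bm * _]mulrA bm_X' scalerN !scalerA.
by rewrite c_k.
Qed.

Lemma commutator_bs_transfer {bj bsj bsp W X X' Y Y' Z : R} {c c' k : F} :
  GRing.comm bsj W -> GRing.comm bsj Y -> GRing.comm bj W -> GRing.comm bsj Y' ->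
  Y' * bsp = Y ->
  X * bsj - bsj * X = (1 - k) *: Z -> X' - bj * X' * bsj = k *: Z ->
  c * (1 - k) = c' * k ->
  c *: (W * (X * Y) * bsj - bsj * (W * (X * Y)))
  = (c' *: (W * (X' * Y')) - bj * (c' *: (W * (X' * Y'))) * bsj) * bsp.
Proof.
move=> bsj_W bsj_Y bj_W bsj_Y' Y'_bsp X_bsj X'_defect c_k.
have -> : W * (X * Y) * bsj - bsj * (W * (X * Y)) = W * ((X * bsj - bsj * X) * Y).
  rewrite [in RHS]mulrBl mulrBr; congr (_ - _); first by rewrite -!mulrA bsj_Y.
  by rewrite !mulrA bsj_W.
have -> : bj * (c' *: (W * (X' * Y'))) * bsj = c' *: (W * ((bj * X' * bsj) * Y')).
  rewrite -scalerAr -scalerAl; congr (_ *: _).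
  by rewrite -!mulrA bsj_Y' !mulrA bj_W.
rewrite -scalerBr -mulrBr -mulrBl X_bsj X'_defect.
by rewrite -!scalerAl -!scalerAr -!scalerAl -!mulrA Y'_bsp !scalerA c_k.
Qed.
End Transfer.

Section SiteRelations.
Context {F : fieldType} {R : algType F} {q : F} {b bs N : R}.

Lemma site_products_of_commutators : 1 - q ^+ 2 != 0 ->
  b * bs - bs * b = (1 - q ^+ 2) *: N ^+ 2 ->
  b * bs - q ^+ 2 *: (bs * b) = (1 - q ^+ 2)%:A ->
  bs * b = 1 - N ^+ 2 /\ b * bs = 1 - q ^+ 2 *: N ^+ 2.
Proof.
move=> q2_neq1 commE mixedE.
have scaled : (1 - q ^+ 2) *: (bs * b) = (1 - q ^+ 2) *: (1 - N ^+ 2).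
  have subrBB (x y z : R) : (x - z) - (x - y) = y - z.
    by rewrite opprB addrC addrA subrK.
  by rewrite scalerBr -commE -mixedE subrBB scalerBl scale1r.
have bs_b : bs * b = 1 - N ^+ 2.
  have := congr1 (fun v => (1 - q ^+ 2)^-1 *: v) scaled.
  by rewrite /= !scalerA mulVf // !scale1r.
split => //.
by rewrite -[b * bs](subrK (bs * b)) commE bs_b scalerBl scale1r addrC addrA subrK.
Qed.

Lemma qN2_commutations : q != 0 ->
  N * b = q^-1 *: (b * N) -> N * bs = q *: (bs * N) ->
  N ^+ 2 * bs = q ^+ 2 *: (bs * N ^+ 2) /\ b * N ^+ 2 = q ^+ 2 *: (N ^+ 2 * b).
Proof.
move=> q_neq0 N_b N_bs.
have b_N : b * N = q *: (N * b) by rewrite N_b scalerA mulfV // scale1r.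
split.
  rewrite !expr2 -mulrA N_bs -scalerAr [N * (bs * N)]mulrA N_bs -scalerAl scalerA.
  by rewrite -mulrA.
rewrite !expr2 [b * (N * N)]mulrA b_N -scalerAl -[N * b * N]mulrA b_N -scalerAr scalerA.
by rewrite mulrA.
Qed.
End SiteRelations.

Section QMinus.
Context {A : algType Kq} {n : nat} {b bs qN qNi : nat -> A}.

Definition prev_site i := if i == 1%N then n else i.-1.
Definition next_site i := if i == n then 1%N else i.+1.

Section Sites.
Context {i : nat}.
Hypothesis i_site : (1 <= i <= n)%N.

Lemma prev_site_range : (1 <= prev_site i <= n)%N.
Proof.
by move: i_site; rewrite /prev_site; case: eqP => ? /andP [? ?]; apply/andP; split; lia.
Qed.

Lemma next_site_range : (1 <= next_site i <= n)%N.
Proof.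
by move: i_site; rewrite /next_site; case: eqP => ? /andP [? ?]; apply/andP; split; lia.
Qed.

Lemma prev_next_site : prev_site (next_site i) = i.
Proof.
move: i_site; rewrite /next_site; case: (i =P n) => [->|?]; first by rewrite /prev_site eqxx.
by rewrite /prev_site; case: eqP => ? //; lia.
Qed.

Lemma next_prev_site : next_site (prev_site i) = i.
Proof.
move: i_site; rewrite /prev_site; case: (i =P 1%N) => [->|?]; first by rewrite /next_site eqxx.
by rewrite /next_site; case: eqP => ? //; lia.
Qed.

Lemma next_site_neq : (1 < n)%N -> next_site i != i.
Proof. by move: i_site; rewrite /next_site; case: (i =P n) => ? /andP [? ?] ?; lia. Qed.

Lemma prev_site_neq : (1 < n)%N -> prev_site i != i.
Proof. by move: i_site; rewrite /prev_site; case: (i =P 1%N) => ? /andP [? ?] ?; lia. Qed.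
End Sites.

Lemma prev_site_inj i k : (1 <= i <= n)%N -> (1 <= k <= n)%N ->
  prev_site i = prev_site k -> i = k.
Proof. by rewrite /prev_site; do 2 case: eqP => ? //; lia. Qed.

Hypothesis n_gt0 : (0 < n)%N.
Hypothesis hrel : qboson_rel n b bs qN qNi.

Lemma mem_sites i : (i \in rev (iota 1 n)) = (1 <= i <= n)%N.
Proof. by rewrite mem_rev mem_iota add1n ltnS. Qed.

Definition qN2 i := qN i ^+ 2.

Lemma site_relations {i} : (1 <= i <= n)%N ->
  [/\ bs i * b i = 1 - qN2 i, b i * bs i = 1 - qq ^+ 2 *: qN2 i,
      qN2 i * bs i = qq ^+ 2 *: (bs i * qN2 i) & b i * qN2 i = qq ^+ 2 *: (qN2 i * b i)].
Proof.
move=> i_site; case: hrel => _ [_ qN_gen comm_gen mixed_gen _].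
have [qN_b qN_bs] := qN_gen i i i_site i_site; rewrite eqxx in qN_b qN_bs.
have commE := comm_gen i i i_site i_site; rewrite eqxx in commE.
have q2_neq1 : 1 - qq ^+ 2 != 0 by rewrite subr_eq0 eq_sym qqX_neq1.
have qq_neq0 : qq != 0 by rewrite /qq tofrac_eq0 polyX_eq0.
have [? ?] := site_products_of_commutators q2_neq1 commE (mixed_gen i i_site).
by have [? ?] := qN2_commutations qq_neq0 qN_b qN_bs.
Qed.

Lemma comm_distinct_sites {i k x y} : (1 <= i <= n)%N -> (1 <= k <= n)%N -> i != k ->
  x \in [:: b i; bs i; qN i; qNi i] -> y \in [:: b k; bs k; qN k; qNi k] ->
  GRing.comm x y.
Proof.
move=> i_site k_site i_neq_k x_in y_in; case: hrel => _ [_ _ _ _ comm_sites].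
exact: comm_sites x_in y_in.
Qed.

Definition part (s : seq nat) i := nth 0%N s i.-1.

Lemma part_incr_nth s k i : (0 < k)%N -> (0 < i)%N ->
  part (incr_nth s k.-1) i = ((k == i) + part s i)%N.
Proof. by rewrite /part nth_incr_nth; case: k => [|k] // _; case: i. Qed.

Definition site_monomial s i := b i ^+ part s i * bs i ^+ part s (prev_site i).
Definition monomial s := \prod_(i <- rev (iota 1 n)) site_monomial s i.

Lemma comm_site_monomial s {i k} : (1 <= i <= n)%N -> (1 <= k <= n)%N -> i != k ->
  [/\ GRing.comm (b i) (site_monomial s k), GRing.comm (bs i) (site_monomial s k)
    & GRing.comm (site_monomial s i) (site_monomial s k)].
Proof.
move=> i_site k_site i_neq_k.
have comm_ik := comm_distinct_sites i_site k_site i_neq_k.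
have comm_b : GRing.comm (b i) (site_monomial s k).
  by apply: commrM; apply/commrX/comm_ik; rewrite !inE eqxx ?orbT.
have comm_bs : GRing.comm (bs i) (site_monomial s k).
  by apply: commrM; apply/commrX/comm_ik; rewrite !inE eqxx ?orbT.
split=> //; apply/commr_sym/commrM; exact/commrX/commr_sym.
Qed.

Lemma Qterm_monomial s : Qterm n b bs s = comp_coef s *: monomial s.
Proof.
rewrite /Qterm /monomial; congr (_ *: _).
have [N nE] : exists N, n = N.+1 by exists n.-1; rewrite prednK.
pose x i := b i ^+ part s i; pose y i := bs i ^+ part s (prev_site i).
rewrite nE [N.+1.-1]/=.
transitivity (x N.+1 * (\prod_(i <- rev (iota 1 N)) (y i.+1 * x i)) * y 1%N).
  congr (_ * _ * _); last by rewrite /y /part /prev_site eqxx nE.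
  apply: eq_big_seq => i; rewrite mem_rev mem_iota => /andP [i_gt0 i_lt].
  rewrite /x /y (_ : prev_site i.+1 = i); last by rewrite /prev_site; case: i i_gt0 {i_lt}.
  have i_site : (1 <= i <= n)%N by rewrite nE i_gt0 ltnW.
  have iS_site : (1 <= i.+1 <= n)%N by rewrite nE.
  have comm_b_bsS : GRing.comm (b i) (bs i.+1).
    by apply: (comm_distinct_sites i_site iS_site); rewrite ?inE ?eqxx ?orbT // ltn_eqF.
  rewrite exprMn_comm //; apply: commrX; apply: commr_sym; apply: commrX.
  exact: commr_sym.
by rewrite (prod_rev_iota_shift x y).
Qed.

Lemma Qm_monomials r : Qm n b bs r = \sum_(s <- comps n r) comp_coef s *: monomial s.
Proof. by apply: eq_bigr => s _; exact: Qterm_monomial. Qed.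

Lemma commutator_Qm x r :
  Qm n b bs r * x - x * Qm n b bs r
  = \sum_(s <- comps n r) comp_coef s *: (monomial s * x - x * monomial s).
Proof.
rewrite Qm_monomials mulr_suml mulr_sumr -sumrB; apply: eq_bigr => s _.
by rewrite scalerBr scalerAl scalerAr.
Qed.

Definition far_sites m := [seq i <- rev (iota 1 n) | (i != m) && (i != next_site m)].
Definition far_monomial s m := \prod_(i <- far_sites m) site_monomial s i.

Section TwoSites.
Variable m : nat.
Hypotheses (n_gt1 : (1 < n)%N) (m_site : (1 <= m <= n)%N).

Let next_site_m : (1 <= next_site m <= n)%N := next_site_range m_site.
Let m_neq_next : m != next_site m.
Proof. by rewrite eq_sym next_site_neq. Qed.

Lemma perm_sites_far : perm_eq (rev (iota 1 n)) (m :: next_site m :: far_sites m).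
Proof.
apply: uniq_perm; first by rewrite rev_uniq iota_uniq.
  rewrite /= inE negb_or m_neq_next !mem_filter !eqxx /= andbF /=.
  by rewrite filter_uniq // rev_uniq iota_uniq.
move=> i; rewrite !inE mem_filter mem_sites.
case: (i =P m) => [->|_]; first by rewrite m_site.
by case: (i =P next_site m) => [->|_] /=; rewrite ?next_site_m ?andbF.
Qed.

Let perm_monomial s {l} : perm_eq (rev (iota 1 n)) l ->
  monomial s = \prod_(i <- l) site_monomial s i.
Proof.
move=> perm_l; apply: perm_big_comm => //; first by rewrite rev_uniq iota_uniq.
move=> i k; rewrite !mem_sites => i_site k_site i_neq_k.
by case: (comm_site_monomial s i_site k_site i_neq_k).
Qed.

Lemma monomial_split s : monomial s
  = site_monomial s m * (site_monomial s (next_site m) * far_monomial s m).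
Proof. by rewrite (perm_monomial s perm_sites_far) !big_cons. Qed.

Lemma monomial_split_far_first s : monomial s
  = far_monomial s m * (site_monomial s m * site_monomial s (next_site m)).
Proof.
have perm_far : perm_eq (rev (iota 1 n)) (far_sites m ++ [:: m; next_site m]).
  by rewrite perm_sym perm_catC perm_sym; exact: perm_sites_far.
by rewrite (perm_monomial s perm_far) big_cat big_cons big_seq1.
Qed.

Lemma far_monomial_incr_nth s : far_monomial (incr_nth s m.-1) m = far_monomial s m.
Proof.
apply: eq_big_seq => i; rewrite mem_filter mem_sites => /andP [/andP [i_neq_m i_neq_next] i_site].
have m_gt0 : (0 < m)%N by case/andP: m_site.
have prev_gt0 : (0 < prev_site i)%N by case/andP: (prev_site_range i_site).
have prev_neq_m : prev_site i != m.
  apply: contra i_neq_next => /eqP prev_i; apply/eqP/prev_site_inj => //.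
  by rewrite (prev_next_site m_site).
rewrite /site_monomial !part_incr_nth //; last by case/andP: i_site.
by rewrite [m == i]eq_sym (negbTE i_neq_m) [m == _]eq_sym (negbTE prev_neq_m).
Qed.

Lemma comm_far_monomial s i : (i == m) || (i == next_site m) ->
  GRing.comm (b i) (far_monomial s m) /\ GRing.comm (bs i) (far_monomial s m).
Proof.
move=> i_near; have i_site : (1 <= i <= n)%N.
  by case/orP: i_near => /eqP ->.
rewrite /far_monomial big_seq; split; apply: commr_prod => k;
  rewrite mem_filter mem_sites => /andP [k_far k_site];
  (have i_neq_k : i != k by apply: contraTneq i_near => ->; rewrite negb_or);
  by case: (comm_site_monomial s i_site k_site i_neq_k).
Qed.

Lemma site_monomial_incr_nth s :
  site_monomial (incr_nth s m.-1) m = b m ^+ (part s m).+1 * bs m ^+ part s (prev_site m).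
Proof.
have m_gt0 : (0 < m)%N by case/andP: m_site.
have prev_gt0 : (0 < prev_site m)%N by case/andP: (prev_site_range m_site).
by rewrite /site_monomial !part_incr_nth // eqxx eq_sym (negbTE (prev_site_neq m_site n_gt1)).
Qed.

Lemma site_monomial_next_incr_nth s :
  site_monomial (incr_nth s m.-1) (next_site m)
  = b (next_site m) ^+ part s (next_site m) * bs (next_site m) ^+ (part s m).+1.
Proof.
have m_gt0 : (0 < m)%N by case/andP: m_site.
have next_gt0 : (0 < next_site m)%N by case/andP: next_site_m.
by rewrite /site_monomial (prev_next_site m_site) !part_incr_nth // (negbTE m_neq_next) eqxx.
Qed.

Lemma monomial_commutator_b_gt1 s : size s = n ->
  let s1 := incr_nth s m.-1 in let j := next_site m in
  comp_coef s1 *: (monomial s1 * b j - b j * monomial s1)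
  = - (b m * (comp_coef s *: monomial s - b j * (comp_coef s *: monomial s) * bs j)).
Proof.
move=> size_s s1 j; have [bs_b b_bs t_bs _] := site_relations next_site_m.
rewrite !monomial_split far_monomial_incr_nth.
have [comm_bj_far comm_bsj_far] :
    GRing.comm (b j) (far_monomial s m) /\ GRing.comm (bs j) (far_monomial s m).
  by apply: comm_far_monomial; rewrite eqxx orbT.
have j_neq_m : j != m by rewrite eq_sym.
apply: (commutator_b_transfer
  (Z := b j ^+ part s j * (bs j ^+ part s m * qN2 j)) (k := qq ^+ (2 * (part s m).+1))).
- by case: (comm_site_monomial s1 next_site_m m_site j_neq_m).
- by case: (comm_site_monomial s next_site_m m_site j_neq_m).
- exact: comm_bj_far.
- exact: comm_bsj_far.
- by rewrite site_monomial_incr_nth /site_monomial mulrA -exprS.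
- by rewrite site_monomial_next_incr_nth; exact: commutator_site_b.
- by rewrite /site_monomial (prev_next_site m_site); exact: defect_site_b.
- by apply: comp_coef_incr_nth; rewrite size_s; case/andP: m_site => ? ?; lia.
Qed.

Lemma monomial_commutator_bs_gt1 s : size s = n ->
  let s1 := incr_nth s m.-1 in
  comp_coef s1 *: (monomial s1 * bs m - bs m * monomial s1)
  = (comp_coef s *: monomial s - b m * (comp_coef s *: monomial s) * bs m) * bs (next_site m).
Proof.
move=> size_s s1; have [bs_b b_bs _ b_t] := site_relations m_site.
rewrite !monomial_split_far_first far_monomial_incr_nth.
have [comm_bm_far comm_bsm_far] :
    GRing.comm (b m) (far_monomial s m) /\ GRing.comm (bs m) (far_monomial s m).
  by apply: comm_far_monomial; rewrite eqxx.
apply: (commutator_bs_transfer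
  (Z := qN2 m * b m ^+ part s m * bs m ^+ part s (prev_site m))
  (k := qq ^+ (2 * (part s m).+1))).
- exact: comm_bsm_far.
- by case: (comm_site_monomial s1 m_site next_site_m m_neq_next).
- exact: comm_bm_far.
- by case: (comm_site_monomial s m_site next_site_m m_neq_next).
- by rewrite site_monomial_next_incr_nth /site_monomial (prev_next_site m_site) -mulrA -exprSr.
- by rewrite site_monomial_incr_nth; exact: commutator_site_bs.
- exact: defect_site_bs.
- by apply: comp_coef_incr_nth; rewrite size_s; case/andP: m_site => ? ?; lia.
Qed.
End TwoSites.

Section SingleSite.
Hypothesis n_eq1 : n = 1%N.

Let one_site : (1 <= 1 <= n)%N. Proof. by rewrite n_eq1. Qed.

Lemma monomial_n1 s : monomial s = b 1 ^+ part s 1 * bs 1 ^+ part s 1.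
Proof.
by rewrite /monomial [in iota _ n]n_eq1 /= big_seq1 /site_monomial /prev_site eqxx n_eq1.
Qed.

Lemma monomial_commutator_b_n1 s : size s = 1%N ->
  comp_coef (incr_nth s 0) *: (monomial (incr_nth s 0) * b 1 - b 1 * monomial (incr_nth s 0))
  = - (b 1 * (comp_coef s *: monomial s - b 1 * (comp_coef s *: monomial s) * bs 1)).
Proof.
move=> size_s; rewrite !monomial_n1 (part_incr_nth s 1 1) //=.
have [bs_b b_bs t_bs _] := site_relations one_site.
rewrite -[bs 1 ^+ (part s 1).+1]mulr1 -[bs 1 ^+ part s 1]mulr1.
apply: (commutator_b_transfer (Z := bs 1 ^+ part s 1 * qN2 1) (k := qq ^+ (2 * (part s 1).+1))).
- exact/commrX/commr_refl.
- exact/commrX/commr_refl.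
- exact: commr1.
- exact: commr1.
- by rewrite -exprS.
- by have := commutator_site_b bs_b b_bs t_bs 0 (part s 1); rewrite !expr0 !mul1r.
- by have := defect_site_b b_bs t_bs 0 (part s 1); rewrite !expr0 !mul1r.
- by apply: comp_coef_incr_nth; rewrite size_s.
Qed.

Lemma monomial_commutator_bs_n1 s : size s = 1%N ->
  comp_coef (incr_nth s 0) *: (monomial (incr_nth s 0) * bs 1 - bs 1 * monomial (incr_nth s 0))
  = (comp_coef s *: monomial s - b 1 * (comp_coef s *: monomial s) * bs 1) * bs 1.
Proof.
move=> size_s; rewrite !monomial_n1 (part_incr_nth s 1 1) //=.
have [bs_b b_bs _ b_t] := site_relations one_site.
rewrite -[b 1 ^+ _ * bs 1 ^+ _.+1]mul1r -[b 1 ^+ _ * bs 1 ^+ part s 1]mul1r.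
apply: (commutator_bs_transfer (Z := qN2 1 * b 1 ^+ part s 1) (k := qq ^+ (2 * (part s 1).+1))).
- exact: commr1.
- exact/commrX/commr_refl.
- exact: commr1.
- exact/commrX/commr_refl.
- by rewrite -exprSr.
- by have := commutator_site_bs bs_b b_bs b_t (part s 1) 0; rewrite !expr0 !mulr1.
- by have := defect_site_bs b_bs b_t (part s 1) 0; rewrite !expr0 !mulr1.
- by apply: comp_coef_incr_nth; rewrite size_s.
Qed.
End SingleSite.

Lemma monomial_commutator_b m s : (1 <= m <= n)%N -> size s = n ->
  let s1 := incr_nth s m.-1 in let j := next_site m in
  comp_coef s1 *: (monomial s1 * b j - b j * monomial s1)
  = - (b m * (comp_coef s *: monomial s - b j * (comp_coef s *: monomial s) * bs j)).
Proof.
move=> m_site size_s; have [n_gt1|n_le1] := ltnP 1 n.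
  exact: monomial_commutator_b_gt1.
have n_eq1 : n = 1%N by lia.
have -> : m = 1%N by lia.
rewrite /next_site n_eq1 /=; apply: monomial_commutator_b_n1 => //.
by rewrite size_s.
Qed.

Lemma monomial_commutator_bs m s : (1 <= m <= n)%N -> size s = n ->
  let s1 := incr_nth s m.-1 in
  comp_coef s1 *: (monomial s1 * bs m - bs m * monomial s1)
  = (comp_coef s *: monomial s - b m * (comp_coef s *: monomial s) * bs m) * bs (next_site m).
Proof.
move=> m_site size_s; have [n_gt1|n_le1] := ltnP 1 n.
  exact: monomial_commutator_bs_gt1.
have n_eq1 : n = 1%N by lia.
have -> : m = 1%N by lia.
rewrite /next_site n_eq1 /=; apply: monomial_commutator_bs_n1 => //.
by rewrite size_s.
Qed.

Lemma monomial_comm_b s {j} : (1 <= j <= n)%N -> part s (prev_site j) = 0%N ->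
  GRing.comm (b j) (monomial s).
Proof.
move=> j_site part0; rewrite /monomial big_seq; apply: commr_prod => i; rewrite mem_sites.
move=> i_site; have [<-|j_neq_i] := eqVneq j i.
  by rewrite /site_monomial part0 expr0 mulr1; exact/commrX/commr_refl.
by case: (comm_site_monomial s j_site i_site j_neq_i).
Qed.

Lemma monomial_comm_bs s {j} : (1 <= j <= n)%N -> part s j = 0%N ->
  GRing.comm (bs j) (monomial s).
Proof.
move=> j_site part0; rewrite /monomial big_seq; apply: commr_prod => i; rewrite mem_sites.
move=> i_site; have [<-|j_neq_i] := eqVneq j i.
  by rewrite /site_monomial part0 expr0 mul1r; exact/commrX/commr_refl.
by case: (comm_site_monomial s j_site i_site j_neq_i).
Qed.

Lemma Qm_commutator_b {m} r : (1 <= m <= n)%N ->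
  let j := next_site m in
  Qm n b bs r * b j - b j * Qm n b bs r
  = - shift1 (fun r' => b m * (Qm n b bs r' - b j * Qm n b bs r' * bs j)) r.
Proof.
move=> m_site j; have j_site := next_site_range m_site.
rewrite commutator_Qm (big_comps_incr_nth _ _
  (fun s => - (b m * (comp_coef s *: monomial s - b j * (comp_coef s *: monomial s) * bs j)))
  n r m.-1).
- case: r => [|r] /=; first by rewrite oppr0.
  by rewrite Qm_monomials mulr_sumr mulr_suml -sumrB mulr_sumr -sumrN.
- by case/andP: m_site => ? ?; lia.
- move=> s _ part0; rewrite (monomial_comm_b s j_site) ?subrr ?scaler0 //.
  by rewrite (prev_next_site m_site).
- move=> s; rewrite mem_comps => /andP [/eqP size_s _].
  exact: monomial_commutator_b.
Qed.

Lemma Qm_commutator_bs {m} r : (1 <= m <= n)%N ->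
  Qm n b bs r * bs m - bs m * Qm n b bs r
  = shift1 (fun r' => (Qm n b bs r' - b m * Qm n b bs r' * bs m) * bs (next_site m)) r.
Proof.
move=> m_site.
rewrite commutator_Qm (big_comps_incr_nth _ _
  (fun s => (comp_coef s *: monomial s - b m * (comp_coef s *: monomial s) * bs m)
            * bs (next_site m))
  n r m.-1).
- case: r => [|r] //=.
  by rewrite Qm_monomials mulr_sumr mulr_suml -sumrB mulr_suml.
- by case/andP: m_site => ? ?; lia.
- by move=> s _ part0; rewrite (monomial_comm_bs s m_site) ?subrr ?scaler0.
- move=> s; rewrite mem_comps => /andP [/eqP size_s _].
  exact: monomial_commutator_bs.
Qed.
End QMinus.

Theorem mainTheorem9 (A : algType Kq) (n : nat) (hn : (0 < n)%N)
    (b bs qN qNi : nat -> A) (hrel : qboson_rel n b bs qN qNi)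
    (j : nat) (hj : (1 <= j <= n)%N) :
  let Q := Qm n b bs in
  let jm := if j == 1%N then n else j.-1 in
  let jp := if j == n then 1%N else j.+1 in
  (forall r : nat,
     Q r * b j - b j * Q r
       = - shift1 (fun r' => b jm * (Q r' - b j * Q r' * bs j)) r)
  /\ (forall r : nat,
     Q r * bs j - bs j * Q r
       = shift1 (fun r' => (Q r' - b j * Q r' * bs j) * bs jp) r).
Proof.
move=> Q jm jp; have jm_site : (1 <= jm <= n)%N by apply: prev_site_range.
split=> r.
- by have := Qm_commutator_b hn hrel r jm_site; rewrite /= (next_prev_site hj).
- by have := Qm_commutator_bs hn hrel r hj.
Qed.
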